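(* Let $F$ and $H$ be graphs with $\chi(F)=3$ and $\chi(H)=2$, assume that $H$ is $F$-Turán-stable and $F$-Turán-good, that $\mathrm{biex}(n,F)=O(1)$, and that $n$ is sufficiently large. If there exists a graph that is nice for $F$ (on $n$ vertices), then there is an $n$-vertex graph $G_0$ that is nice for $F$ with $\mathrm{ex}(n,H,F)=\mathcal{N}(H,G_0)$.
   Context: All graphs are finite and simple. $\mathrm{ex}(n,F)$ is the maximum number of edges in an $n$-vertex $F$-free graph; $\mathcal{N}(H,G)$ is the number of subgraphs of $G$ isomorphic to $H$; $\mathrm{ex}(n,H,F)$ is the maximum of $\mathcal{N}(H,G)$ over $n$-vertex $F$-free graphs $G$. $T(n,r)$ is the complete $r$-partite $n$-vertex graph with parts of sizes $\lfloor n/r\rfloor$ or $\lceil n/r\rceil$. For $F$ with $\chi(F)=r+1$, an $n$-vertex $F$-free graph $G$ is nice for $F$ if $G$ contains $T(n,r)$ as a spanning subgraph and $|E(G)|=\mathrm{ex}(n,F)$. $H$ is $F$-Turán-good if $\chi(H)<\chi(F)$ and $\mathrm{ex}(n,H,F)=\mathcal{N}(H,T(n,\chi(F)-1))$ for all large $n$. The edit distance between two graphs on the same vertex set is the least number of edges one must add and delete to turn one into the other. $H$ is $F$-Turán-stable if every $n$-vertex $F$-free graph $G$ with $\mathcal{N}(H,G)\ge \mathrm{ex}(n,H,F)-o(n^{|V(H)|})$ has edit distance $o(n^2)$ from a copy of $T(n,\chi(F)-1)$ on $V(G)$ (asymptotics as $n\to\infty$). For $\chi(F)=3$, the decomposition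 family $\mathcal{D}(F)$ is the set of bipartite graphs obtained from $F$ by deleting one color class of a proper $3$-coloring, and $\mathrm{biex}(n,F)$ is the maximum number of edges in an $n$-vertex graph containing no member of $\mathcal{D}(F)$. *)

From mathcomp Require Import all_boot all_order all_algebra.
From mathcomp Require Import fingroup perm.
Set Implicit Arguments. Unset Strict Implicit. Unset Printing Implicit Defensive.
Import Order.TTheory GRing.Theory Num.Theory.

Definition is_graph (V : finType) (E : {set {set V}}) : bool :=
  [forall e in E, #|e| == 2].

Definition adj (V : finType) (E : {set {set V}}) (x y : V) : bool :=
  [set x; y] \in E.

Definition embedding (VH V : finType) (EH : {set {set VH}}) (E : {set {set V}})
  (f : {ffun VH -> V}) : bool :=
  injectiveb f && [forall e in EH, (f @: e) \in E].

Definition contains (VH V : finType) (EH : {set {set VH}}) (E : {set {set V}}) : bool :=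
  [exists f : {ffun VH -> V}, embedding EH E f].

Definition free (VF V : finType) (EF : {set {set VF}}) (E : {set {set V}}) : bool :=
  ~~ contains EF E.

(* N(H,G): the number of subgraphs of G isomorphic to H; a subgraph is a pair
   (vertex set, edge set), and the subgraphs isomorphic to H are exactly the
   images of H under the embeddings of H into G. *)
Definition NH (VH V : finType) (EH : {set {set VH}}) (E : {set {set V}}) : nat :=
  #|[set ((f @: [set: VH]), [set (f @: (e : {set VH})) | e in EH]) |
       f : {ffun VH -> V} in [pred g | embedding EH E g]]|.

Definition colorable (V : finType) (E : {set {set V}}) (k : nat) : bool :=
  [exists c : {ffun V -> 'I_k}, [forall x, forall y, adj E x y ==> (c x != c y)]].

(* chi(G) = least k such that G is properly k-colourable (k <= |V| always
   suffices for a simple graph). *)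
Definition chi (V : finType) (E : {set {set V}}) : nat :=
  find (colorable E) (iota 0 #|V|.+1).

Definition ex (VF : finType) (EF : {set {set VF}}) (n : nat) : nat :=
  \max_(E : {set {set 'I_n}} | is_graph E && free EF E) #|E|.

Definition exH (VH VF : finType) (EH : {set {set VH}}) (EF : {set {set VF}})
  (n : nat) : nat :=
  \max_(E : {set {set 'I_n}} | is_graph E && free EF E) NH EH E.

(* The Turán graph T(n,r): parts are the residue classes mod r, whose sizes
   are floor(n/r) or ceil(n/r). *)
Definition turan (n r : nat) : {set {set 'I_n}} :=
  [set e : {set 'I_n} | [exists x : 'I_n, exists y : 'I_n, (e == [set x; y]) && (x %% r != y %% r)]].

Definition nice (VF : finType) (EF : {set {set VF}}) (n : nat)
  (E : {set {set 'I_n}}) : Prop :=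
  [/\ is_graph E, free EF E,
      contains (turan n (chi EF).-1) E
    & #|E| = ex EF n].

Definition turan_good (VH VF : finType) (EH : {set {set VH}}) (EF : {set {set VF}})
  : Prop :=
  chi EH < chi EF /\
  exists N, forall n, N <= n -> exH EH EF n = NH EH (turan n (chi EF).-1).

Definition edit_dist_copy (n r : nat) (E : {set {set 'I_n}}) (s : {perm 'I_n}) : nat :=
  #|(E :\: [set (s @: (e : {set 'I_n})) | e in turan n r]) :|: ([set (s @: (e : {set 'I_n})) | e in turan n r] :\: E)|.

(* H is F-Turán-stable (the o(.) statement written with epsilon/delta) *)
Definition turan_stable (VH VF : finType) (EH : {set {set VH}}) (EF : {set {set VF}})
  : Prop :=
  forall eps : rat, (0 < eps)%R ->
  exists delta : rat, (0 < delta)%R /\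
  exists N, forall n, N <= n ->
  forall E : {set {set 'I_n}}, is_graph E -> free EF E ->
  ((exH EH EF n)%:R - delta * (n ^ #|VH|)%:R <= (NH EH E)%:R :> rat)%R ->
  exists s : {perm 'I_n},
    ((edit_dist_copy (chi EF).-1 E s)%:R <= eps * (n ^ 2)%:R :> rat)%R.

Definition contains_on (VF V : finType) (EF : {set {set VF}}) (S : {set VF})
  (E : {set {set V}}) : bool :=
  [exists f : {ffun VF -> V},
     [forall x in S, forall y in S, (f x == f y) ==> (x == y)] &&
     [forall e in EF, (e \subset S) ==> ((f @: e) \in E)]].

(* E contains no member of the decomposition family D(F) (chi(F) = 3): the
   members are F minus one colour class of a proper 3-colouring. *)
Definition D_free (VF V : finType) (EF : {set {set VF}}) (E : {set {set V}}) : bool :=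
  [forall c : {ffun VF -> 'I_3},
     [forall x, forall y, adj EF x y ==> (c x != c y)] ==>
     [forall i : 'I_3, ~~ contains_on EF [set v | c v != i] E]].

Definition biex (VF : finType) (EF : {set {set VF}}) (n : nat) : nat :=
  \max_(E : {set {set 'I_n}} | is_graph E && D_free EF E) #|E|.

From Pilot Require Import Defs.
From mathcomp Require Import all_boot all_order all_algebra.
From mathcomp Require Import fingroup perm.

(* A graph that is nice for F contains T(n, 2), so it has at least as many
   copies of H as T(n, 2); Turán-goodness says that T(n, 2) already attains
   ex(n, H, F), and an F-free graph cannot exceed it.  Hence every nice graph
   attains ex(n, H, F). *)

Section Embeddings.

Variables (VH V W : finType).

Lemma embedding_comp (EH : {set {set VH}}) (E : {set {set V}})
    (E' : {set {set W}}) (f : {ffun VH -> V}) (g : {ffun V -> W}) :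
  embedding EH E f -> embedding E E' g -> embedding EH E' [ffun v => g (f v)].
Proof.
move=> /andP[/injectiveP f_inj /forallP fE] /andP[/injectiveP g_inj /forallP gE].
apply/andP; split.
  by apply/injectiveP => u v; rewrite !ffunE => /g_inj /f_inj.
apply/forallP => e; apply/implyP => eEH.
have -> : [ffun v => g (f v)] @: e = g @: (f @: e).
  by rewrite -imset_comp; apply: eq_imset => v; rewrite ffunE.
exact: (implyP (gE _) (implyP (fE e) eEH)).
Qed.

Lemma NH_contains_mono (EH : {set {set VH}}) (E : {set {set V}})
    (E' : {set {set W}}) :
  contains E E' -> NH EH E <= NH EH E'.
Proof.
move=> /existsP[g gE']; have /andP[/injectiveP g_inj _] := gE'.
have gA_inj : injective (fun A : {set V} => g @: A) by exact: imset_inj.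
pose push (p : {set V} * {set {set V}}) :=
  (g @: p.1, [set g @: (e : {set V}) | e in p.2]).
have push_inj : injective push.
  by move=> [a b] [c d] [/gA_inj -> /(imset_inj gA_inj) ->].
rewrite /NH -(card_imset _ push_inj); apply: subset_leq_card.
apply/subsetP => _ /imsetP[_ /imsetP[f fE ->] ->].
have gf_img (A : {set VH}) : [ffun v => g (f v)] @: A = g @: (f @: A).
  by rewrite -imset_comp; apply: eq_imset => v; rewrite ffunE.
apply/imsetP; exists [ffun v => g (f v)].
  by rewrite inE; apply: embedding_comp gE'; rewrite inE in fE.
rewrite /push /= gf_img; congr pair.
by rewrite -imset_comp; apply: eq_imset => e /=; rewrite gf_img.
Qed.

End Embeddings.

Lemma NH_leq_exH (VH VF : finType) (EH : {set {set VH}}) (EF : {set {set VF}})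
    (n : nat) (E : {set {set 'I_n}}) :
  (* qualified: the imports above shadow [free] with vector.v's *)
  is_graph E -> Defs.free EF E -> NH EH E <= exH EH EF n.
Proof. by move=> E_graph E_free; apply: leq_bigmax_cond; rewrite E_graph. Qed.

Lemma exH_nice_turan_good (VH VF : finType) (EH : {set {set VH}})
    (EF : {set {set VF}}) (n : nat) (E : {set {set 'I_n}}) :
  exH EH EF n = NH EH (turan n (chi EF).-1) -> nice EF E -> exH EH EF n = NH EH E.
Proof.
move=> exH_turan [E_graph E_free E_turan _].
apply/eqP; rewrite eqn_leq NH_leq_exH // andbT exH_turan.
exact: NH_contains_mono.
Qed.

Theorem theorem1p7 (VF VH : finType) (EF : {set {set VF}}) (EH : {set {set VH}}) :
  is_graph EF -> is_graph EH ->
  chi EF = 3 -> chi EH = 2 ->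
  turan_stable EH EF -> turan_good EH EF ->
  (exists C N, forall n, N <= n -> biex EF n <= C) ->
  exists N, forall n, N <= n ->
    (exists G : {set {set 'I_n}}, nice EF G) ->
    exists G0 : {set {set 'I_n}}, nice EF G0 /\ exH EH EF n = NH EH G0.
Proof.
move=> _ _ _ _ _ [_ [N exH_turan]] _.
exists N => n le_Nn [G G_nice]; exists G; split=> //.
exact: exH_nice_turan_good (exH_turan n le_Nn) G_nice.
Qed.
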